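(* Given a mixture of Bayesian network distributions that are Markovian in $\mathcal{G}$, if $X \perp \!\!\! \perp^{\mathcal{G}}_d Y \mid \vec{C}$, then for all assignments $\vec{c}$ to $\vec{C}$, $\operatorname{rk}_+(\mathbf{M}[X, Y \mid \vec c]) \leq k$.
   Context: $\mathcal{G} = (\vec{V}, \vec{E})$ is a DAG on observed discrete variables; a latent discrete variable $U \in \{1,\ldots,k\}$ is a parent of every observed variable (the augmented DAG is $\mathcal{G}'$), so the observed distribution is a $k$-mixture (over values $u$ of $U$) of distributions $\Pr(\vec V \mid u)$, each Markovian in $\mathcal{G}$. $X, Y \in \vec V$, $\vec C \subseteq \vec V$. For discrete $X,Y$ with $m$ values, the probability matrix $\mathbf{M}[X, Y \mid \vec{c}] \in [0,1]^{m\times m}$ has entries $\mathbf{M}[X, Y \mid \vec{c}]_{x,y} := \Pr(x, y \mid \vec{c})$. $\operatorname{rk}_+$ denotes nonnegative rank. $\perp \!\!\! \perp^{\mathcal{G}}_d$ denotes d-separation in $\mathcal{G}$. *)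

From HB Require Import structures.
From mathcomp Require Import all_boot all_order all_algebra.
From Stdlib Require Import ClassicalEpsilon.
Set Implicit Arguments. Unset Strict Implicit. Unset Printing Implicit Defensive.
Import Order.TTheory GRing.Theory Num.Theory.
Local Open Scope ring_scope.

(* The DAG G is given by its edge
   relation E (E i j means an edge i -> j). *)

Definition assignment (n : nat) (V : 'I_n -> finType) := {dffun forall i : 'I_n, V i}.

Definition acyclic (n : nat) (E : rel 'I_n) : Prop :=
  forall i j, E i j -> ~~ connect E j i.

Definition adj (n : nat) (E : rel 'I_n) : rel 'I_n := fun a b => E a b || E b a.

Definition collider (n : nat) (E : rel 'I_n) (a b c : 'I_n) : bool := E a b && E c b.

(* x :: p is an active (simple) trail from x to y given C: consecutive nodes
   are adjacent, no node is repeated, and every interior node b (with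
   neighbours a, c on the trail) is either a collider having itself or a
   descendant in C, or a non-collider not in C. *)
Definition active_trail (n : nat) (E : rel 'I_n) (C : {set 'I_n})
    (x y : 'I_n) (p : seq 'I_n) : Prop :=
  [/\ path (adj E) x p, last x p = y, uniq (x :: p) &
      forall i : nat, (0 < i < size p)%N ->
        let a := nth x (x :: p) i.-1 in
        let b := nth x (x :: p) i in
        let c := nth x (x :: p) i.+1 in
        if collider E a b c then exists2 d, connect E b d & d \in C
        else b \notin C].

Definition dsep (n : nat) (E : rel 'I_n) (X Y : 'I_n) (C : {set 'I_n}) : Prop :=
  forall p : seq 'I_n, ~ active_trail E C X Y p.

Definition markovian (R : realFieldType) (n : nat) (E : rel 'I_n)
    (V : 'I_n -> finType) (P : assignment V -> R) : Prop :=
  exists cpt : forall i : 'I_n, assignment V -> V i -> R,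
    [/\ forall i v x, 0 <= cpt i v x,
        forall i v, \sum_(x : V i) cpt i v x = 1,
        forall i (v w : assignment V),
          (forall j, E j i -> v j = w j) -> forall x, cpt i v x = cpt i w x &
        forall v, P v = \prod_(i < n) cpt i v (v i)].

(* P is the observed distribution of a latent U in {1..k} (here 'I_k) that is
   a parent of every observed variable: a k-mixture of distributions each
   Markovian in G. *)
Definition mixture_BN (R : realFieldType) (n : nat) (E : rel 'I_n)
    (V : 'I_n -> finType) (k : nat) (P : assignment V -> R) : Prop :=
  exists (w : 'I_k -> R) (Pu : 'I_k -> assignment V -> R),
    [/\ forall u, 0 <= w u,
        \sum_(u < k) w u = 1,
        forall u, markovian E (Pu u) &
        forall v, P v = \sum_(u < k) w u * Pu u v].

Definition prob_event (R : realFieldType) (n : nat) (V : 'I_n -> finType)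
    (P : assignment V -> R) (A : pred (assignment V)) : R :=
  \sum_(v : assignment V | A v) P v.

(* the event C = c, where the assignment c to C is given as the restriction
   to C of a full assignment cv *)
Definition cond_event (n : nat) (V : 'I_n -> finType) (C : {set 'I_n})
    (cv : assignment V) : pred (assignment V) :=
  fun v => [forall j in C, v j == cv j].

(* M[X, Y | c]_{x,y} = Pr(x, y | c)  (division by 0 gives 0 in MathComp) *)
Definition prob_matrix (R : realFieldType) (n : nat) (V : 'I_n -> finType)
    (P : assignment V -> R) (X Y : 'I_n) (C : {set 'I_n}) (cv : assignment V)
    : V X -> V Y -> R :=
  fun x y =>
    prob_event P (fun v => [&& v X == x, v Y == y & cond_event C cv v])
    / prob_event P (cond_event C cv).

Definition nn_factorization (R : realFieldType) (A B : finType)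
    (M : A -> B -> R) (r : nat) : Prop :=
  exists (W : A -> 'I_r -> R) (H : 'I_r -> B -> R),
    [/\ forall a l, 0 <= W a l,
        forall l b, 0 <= H l b &
        forall a b, M a b = \sum_(l < r) W a l * H l b].

(* rk_+(M) = least r such that M has a nonnegative factorization with inner
   dimension r (well defined for entrywise nonnegative M). *)
Definition nnrank (R : realFieldType) (A B : finType) (M : A -> B -> R) : nat :=
  epsilon (inhabits 0%N)
    (fun r => nn_factorization M r /\
              forall r', nn_factorization M r' -> (r <= r')%N).

Arguments prob_matrix {R n V} P X Y C cv.
Arguments nnrank {R A B} M.
Arguments dsep {n} E X Y C.
Arguments mixture_BN {R n} E {V} k P.
Arguments markovian {R n} E {V} P.
Arguments acyclic {n} E.

(* For a single Bayesian network, Pr(x, y, c) factorizes as f(x) g(y).  Summing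
   out the non-ancestors of {X, Y} u C leaves the product of the conditional
   probability tables over the ancestral set An.  Let Z be the set of nodes
   outside C reachable from X by an active walk.  Y is not in Z, since an
   active walk shortens to an active trail, and extending walks shows that the
   family of a node of An meeting Z lies in Z u C.  Hence, with the
   C-coordinates fixed to c, the factors whose family meets Z depend only on Z
   and the others only on its complement, and the sum of their product splits.
   A k-mixture of such nonnegative rank-one matrices has nonnegative rank at
   most k. *)

From HB Require Import structures.
From mathcomp Require Import all_boot all_order all_algebra.
From mathcomp Require Import zify boolp.
From Stdlib Require Import ClassicalEpsilon.
Set Implicit Arguments. Unset Strict Implicit. Unset Printing Implicit Defensive.
Import Order.TTheory GRing.Theory Num.Theory.

Section Ancestors.
Variables (n : nat) (E : rel 'I_n).

Definition ancestors (S : {set 'I_n}) : {set 'I_n} :=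
  [set a | [exists d in S, connect E a d]].

Definition family_of (i : 'I_n) : {set 'I_n} := i |: [set j | E j i].

Lemma ancestorsP (S : {set 'I_n}) a :
  reflect (exists2 d, d \in S & connect E a d) (a \in ancestors S).
Proof. by rewrite inE; apply: (iffP exists_inP). Qed.

Lemma mem_ancestors (S : {set 'I_n}) a : a \in S -> a \in ancestors S.
Proof. by move=> aS; apply/ancestorsP; exists a. Qed.

Lemma ancestors_connect (S : {set 'I_n}) a b :
  connect E a b -> b \in ancestors S -> a \in ancestors S.
Proof.
move=> ab /ancestorsP[d dS bd]; apply/ancestorsP; exists d => //.
exact: connect_trans bd.
Qed.

Lemma ancestors_edge (S : {set 'I_n}) a b :
  E a b -> b \in ancestors S -> a \in ancestors S.
Proof. by move/connect1; apply: ancestors_connect. Qed.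

Lemma in_family_of i j : (j \in family_of i) = (j == i) || E j i.
Proof. by rewrite !inE. Qed.

Hypothesis acyclicE : acyclic E.

Lemma acyclic_irrefl a : ~~ E a a.
Proof. by apply/negP => aa; have := acyclicE aa; rewrite connect0. Qed.

Lemma acyclic_asym a b : E a b -> ~~ E b a.
Proof.
by move=> ab; apply/negP => /connect1 ba; have := acyclicE ab; rewrite ba.
Qed.

(* An element of S with fewest descendants has no child in S. *)
Lemma acyclic_sink (S : {set 'I_n}) :
  S != set0 -> exists2 i, i \in S & forall j, j \in S -> ~~ E i j.
Proof.
case/set0Pn => i0 i0S.
have [i iS imin] := arg_minnP (fun i => #|[set j | connect E i j]|) i0S.
exists i => // j jS; apply/negP => ij.
have := imin j jS; apply/negP; rewrite -ltnNge; apply: proper_card.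
apply/properP; split.
  by apply/subsetP => l; rewrite !inE; apply: connect_trans (connect1 ij).
by exists i; rewrite inE ?connect0 ?(negbTE (acyclicE ij)).
Qed.

End Ancestors.

Section ActiveWalks.
Variables (n : nat) (E : rel 'I_n) (C : {set 'I_n}) (X Y : 'I_n).
Hypothesis acyclicE : acyclic E.
Local Notation AnC := (ancestors E C).
Local Notation An := (ancestors E (X |: (Y |: C))).

Definition active_at (a b c : 'I_n) : bool :=
  if collider E a b c then b \in AnC else b \notin C.

(* [s] lists the nodes of a walk from X to t; unlike an active trail, it may
   revisit nodes. *)
Definition active_walk (s : seq 'I_n) (t : 'I_n) : Prop :=
  [/\ 0 < size s, nth X s 0 = X, nth X s (size s).-1 = t,
      forall i, i.+1 < size s -> adj E (nth X s i) (nth X s i.+1) &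
      forall i, i.+2 < size s ->
        active_at (nth X s i) (nth X s i.+1) (nth X s i.+2)].

Definition reachable (t : 'I_n) : Prop := exists s, active_walk s t.

Definition ends_backward (s : seq 'I_n) (a : 'I_n) : Prop :=
  1 < size s -> E a (nth X s (size s).-2).

Lemma notin_ancestors a : a \notin AnC -> a \notin C.
Proof. by apply: contra; apply: mem_ancestors. Qed.

Lemma active_at_noncollider a b c :
  E b a || E b c -> b \notin C -> active_at a b c.
Proof.
move=> /orP[] /(acyclic_asym acyclicE) /negbTE nb bC;
by rewrite /active_at /collider nb ?andbF.
Qed.

Lemma active_walk1 : active_walk [:: X] X.
Proof. by split=> // i. Qed.

Lemma active_walk_rcons s a b :
  active_walk s a -> adj E a b ->
  (1 < size s -> active_at (nth X s (size s).-2) a b) ->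
  active_walk (rcons s b) b.
Proof.
case=> s0 sX sa sadj sact ab sab; split.
- by rewrite size_rcons.
- by rewrite nth_rcons s0.
- by rewrite size_rcons nth_rcons ltnn eqxx.
- move=> i; rewrite size_rcons ltnS !nth_rcons => lti.
  have [lt_is|ge_is] := ltnP i.+1 (size s); first by rewrite (ltnW lt_is) sadj.
  have e1 : i.+1 == size s by apply/eqP; lia.
  by rewrite lti e1 (_ : i = (size s).-1) ?sa //; lia.
- move=> i; rewrite size_rcons ltnS !nth_rcons => lti.
  have [lt_is|ge_is] := ltnP i.+2 (size s).
    by rewrite (ltnW lt_is) (ltnW (ltnW lt_is)) sact.
  have e2 : i.+2 == size s by apply/eqP; lia.
  rewrite lti (_ : i < size s) ?e2; last by lia.
  rewrite (_ : i.+1 = (size s).-1) ?sa; last by lia.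
  by rewrite (_ : i = (size s).-2); [apply: sab | ]; lia.
Qed.

(* a is a non-collider on the extended walk. *)
Lemma active_walk_extend s a b :
  active_walk s a -> ends_backward s a ->
  a \notin C -> adj E a b -> reachable b.
Proof.
move=> ws out aC ab; exists (rcons s b); apply: active_walk_rcons ws ab _.
by move=> /out ea; apply: active_at_noncollider aC; rewrite ea.
Qed.

Lemma active_walk_cat_path s a q :
  active_walk s a -> a \notin AnC -> path E a q ->
  active_walk (s ++ q) (last a q).
Proof.
elim: q s a => [|b q IHq] s a ws aC /=; first by rewrite cats0.
case/andP=> ab bq; rewrite -cat_rcons; apply: IHq bq.
- apply: active_walk_rcons ws _ _; first by rewrite /adj ab.
  move=> _; apply: active_at_noncollider (notin_ancestors aC).
  by rewrite ab orbT.
- by apply: contra aC; apply: ancestors_edge.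
Qed.

Lemma active_walk_of_path_to_X a q :
  path E a q -> last a q = X -> a \notin AnC ->
  exists2 s, active_walk s a & ends_backward s a.
Proof.
elim: q a => [|b q IHq] a /=.
  by move=> _ -> _; exists [:: X]; first exact: active_walk1.
case/andP=> ab bq bX aC.
have bC : b \notin AnC by apply: contra aC; apply: ancestors_edge.
have [s ws out] := IHq b bq bX bC.
have [s0 _ sb _ _] := ws.
exists (rcons s a); last first.
  rewrite /ends_backward size_rcons nth_rcons (_ : (size s).-1 < size s) ?sb //.
  by lia.
apply: active_walk_rcons ws _ _; first by rewrite /adj ab orbT.
move=> /out ba; apply: active_at_noncollider (notin_ancestors bC).
by rewrite ba.
Qed.

(* a reaches X or Y by a directed path: towards Y it prolongs the walk, and
   reversed from X it is itself an active walk. *)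
Lemma active_walk_reroute s a :
  active_walk s a -> a \in An -> a \notin AnC ->
  reachable Y \/ exists2 s', active_walk s' a & ends_backward s' a.
Proof.
move=> ws /ancestorsP[d dS /connectP[q aq dq]] aC; move: dS; rewrite dq !inE.
case/or3P=> [/eqP dX | /eqP dY | dC].
- by right; apply: active_walk_of_path_to_X aq _ aC; rewrite dX.
- by left; exists (s ++ q); rewrite -dY; apply: active_walk_cat_path.
- case/negP: aC; apply/ancestorsP; exists (last a q) => //.
  by apply/connectP; exists q.
Qed.

Lemma reachable_adj s a b :
  active_walk s a -> a \notin C -> a \in An -> adj E a b ->
  reachable b \/ reachable Y.
Proof.
move=> ws aC aA ab.
have [act | inact] :=
  boolP ((1 < size s) ==> active_at (nth X s (size s).-2) a b).
  by left; exists (rcons s b); apply: active_walk_rcons ws ab (implyP act).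
have aC' : a \notin AnC.
  move: inact; rewrite negb_imply /active_at.
  by case: collider => /andP[_]; rewrite ?aC.
case: (active_walk_reroute ws aA aC') => [|[s' ws' out]]; first by right.
by left; apply: active_walk_extend ws' out aC ab.
Qed.

Lemma reachable_coparent s a b d :
  active_walk s a -> a \notin C -> E a d -> E b d -> d \in An ->
  reachable b \/ reachable Y.
Proof.
move=> ws aC ad bd dA.
have wsd : active_walk (rcons s d) d.
  apply: active_walk_rcons ws _ _; first by rewrite /adj ad.
  by move=> _; apply: active_at_noncollider aC; rewrite ad orbT.
have [dC | dC] := boolP (d \in AnC).
  left; exists (rcons (rcons s d) b); apply: active_walk_rcons wsd _ _.
    by rewrite /adj bd orbT.
  have [s0 _ sa _ _] := ws.
  rewrite size_rcons nth_rcons (_ : (size s).-1 < size s); last by lia.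
  by rewrite sa /active_at /collider ad bd.
case: (active_walk_reroute wsd dA dC) => [|[s' ws' out]]; first by right.
left; apply: active_walk_extend ws' out (notin_ancestors dC) _.
by rewrite /adj bd orbT.
Qed.

Lemma reachable_family i z j :
  ~ reachable Y -> i \in An -> z \notin C -> reachable z ->
  z \in family_of E i -> j \in family_of E i -> reachable j.
Proof.
move=> noY iA zC [s ws]; rewrite !in_family_of.
have keep P : P \/ reachable Y -> P by case=> // /noY.
case/orP=> [/eqP zi | zi] /orP[/eqP ji | ji].
- by exists s; rewrite ji -zi.
- by apply: keep; apply: reachable_adj ws zC _ _; rewrite zi // /adj ji orbT.
- apply: keep; apply: reachable_adj ws zC _ _; last by rewrite /adj ji zi.
  exact: ancestors_edge zi iA.
- by apply: keep; apply: reachable_coparent ws zC zi ji iA.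
Qed.

Section Shortcut.
Variables (s : seq 'I_n) (t : 'I_n).
Hypothesis ws : active_walk s t.

(* Following the forward edges from s_i, the first backward edge reveals a
   collider, which is in An(C). *)
Lemma forward_backward_ancestor k i :
  i + k.+2 < size s -> E (nth X s i) (nth X s i.+1) ->
  E (nth X s (i + k).+2) (nth X s (i + k).+1) -> nth X s i \in AnC.
Proof.
case: ws => _ _ _ sadj sact.
elim: k i => [|k IHk] i lt_s ei ek; apply: (ancestors_edge ei).
  by have := sact i ltac:(lia); rewrite /active_at /collider ei -(addn0 i) ek.
have /orP[e12 | e21] := sadj i.+1 ltac:(lia).
  by apply: IHk e12 _; [lia | rewrite addSnnS].
by have := sact i ltac:(lia); rewrite /active_at /collider ei e21.
Qed.

(* Cutting the loop s_(i+1) ... s_j of a walk keeps the junction active. *)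
Lemma active_at_shortcut i j :
  i.+1 < j -> j.+1 < size s -> nth X s i.+1 = nth X s j ->
  active_at (nth X s i) (nth X s i.+1) (nth X s j.+1).
Proof.
case: ws => _ _ _ sadj sact lt_ij lt_js.
set b := nth X s i.+1 => bj.
have acti := sact i ltac:(lia).
have actj : active_at (nth X s j.-1) b (nth X s j.+1).
  by have := sact j.-1 ltac:(lia); rewrite prednK -?bj //; lia.
rewrite /active_at; case: ifP => [/andP[ib jb] | /negbT].
  move: acti; rewrite /active_at /collider ib /=.
  case e2: (E (nth X s i.+2) b) => // _.
  have b2 : E b (nth X s i.+2).
    by have := sadj i.+1 ltac:(lia); rewrite /adj e2 orbF.
  move: actj; rewrite /active_at /collider jb andbT.
  case e1: (E (nth X s j.-1) b) => // _.
  have b1 : E (nth X s j) (nth X s j.-1).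
    by have := sadj j.-1 ltac:(lia); rewrite prednK -?bj /adj ?e1 //; lia.
  have [j2 | j3] : j = i.+2 \/ i.+2 < j by lia.
    by move: b2; rewrite -j2 -bj (negbTE (acyclic_irrefl acyclicE b)).
  apply: (@forward_backward_ancestor (j - i.+3) i.+1 _ b2); first by lia.
  rewrite (_ : (i.+1 + (j - i.+3)).+2 = j); last by lia.
  by rewrite (_ : (i.+1 + (j - i.+3)).+1 = j.-1); last by lia.
rewrite /collider negb_and => /orP[] /negbTE nb.
  by move: acti; rewrite /active_at /collider nb.
by move: actj; rewrite /active_at /collider nb andbF.
Qed.

Definition shortcut i j := take i.+1 s ++ drop j.+1 s.

Lemma size_shortcut i j :
  i < j < size s -> size (shortcut i j) = size s - (j - i).
Proof.
move=> /andP[lt_ij lt_js].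
by rewrite size_cat size_take size_drop (_ : i.+1 < size s); lia.
Qed.

Lemma nth_shortcut_le i j k :
  i < j < size s -> k <= i -> nth X (shortcut i j) k = nth X s k.
Proof.
move=> /andP[lt_ij lt_js] le_ki.
rewrite nth_cat size_take (_ : i.+1 < size s); last by lia.
by rewrite ltnS le_ki nth_take.
Qed.

Lemma nth_shortcut_ge i j k :
  i < j < size s -> nth X s i = nth X s j -> i <= k ->
  nth X (shortcut i j) k = nth X s (k + (j - i)).
Proof.
move=> /andP[lt_ij lt_js] eij le_ik.
rewrite nth_cat size_take (_ : i.+1 < size s); last by lia.
case: ltnP => [lt_ki | le_ik1].
  by rewrite nth_take // (_ : k = i) ?eij; [congr nth | ]; lia.
by rewrite nth_drop; congr nth; lia.
Qed.

Lemma active_walk_shortcut i j :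
  i < j < size s -> nth X s i = nth X s j -> active_walk (shortcut i j) t.
Proof.
move=> ijs eij; have /andP[lt_ij lt_js] := ijs.
have [s0 sX st sadj sact] := ws.
have Le := nth_shortcut_le ijs; have Ge := nth_shortcut_ge ijs eij.
split; rewrite ?size_shortcut //.
- by lia.
- by rewrite Le.
- by rewrite Ge -?st; [congr nth | ]; lia.
- move=> k lt_k; have [lt_ki | le_ik] := ltnP k i.
    by rewrite !Le; [apply: sadj | ..]; lia.
  by rewrite !Ge ?addSn; [apply: sadj | ..]; lia.
move=> k lt_k; case: (ltngtP k.+1 i) => [lt_ki | lt_ik | ki].
- by rewrite !Le; [apply: sact | ..]; lia.
- by rewrite !Ge ?addSn; [apply: sact | ..]; lia.
rewrite (Ge k.+2) ?(Le k) ?(Le k.+1); try lia.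
rewrite (_ : k.+2 + (j - i) = j.+1); last by lia.
by apply: active_at_shortcut; rewrite ?ki //; lia.
Qed.

End Shortcut.

Lemma active_walk_uniq s t :
  active_walk s t -> exists2 s', active_walk s' t & uniq s'.
Proof.
elim: {s}_.+1 {-2}s (ltnSn (size s)) => // m IHm s lt_sm ws.
have [us | /(uniqPn X)[i [j [lt_ij lt_js eij]]]] := boolP (uniq s).
  by exists s.
have ijs : i < j < size s by rewrite lt_ij.
apply: (IHm (shortcut s i j)); last exact: active_walk_shortcut.
by rewrite size_shortcut; lia.
Qed.

Lemma active_trail_of_walk s :
  active_walk s Y -> uniq s -> active_trail E C X Y (behead s).
Proof.
case: s => [|x p] [] //= _ -> pY padj pact up; split=> //.
- by apply/(pathP X) => i /padj.
- by rewrite (last_nth X).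
move=> [//|i] /andP[_ ip] /=.
have := pact i ip; rewrite /active_at.
by case: collider => // /ancestorsP[d dC hd]; exists d.
Qed.

Lemma dsep_unreachable : dsep E X Y C -> ~ reachable Y.
Proof.
move=> dXY [s /active_walk_uniq[s' ws' us']].
exact: dXY _ (active_trail_of_walk ws' us').
Qed.

(* In the moral graph of An(X, Y, C) with C deleted, whose cliques are the
   families, Z is a union of connected components separating X from Y. *)
Definition moral_separator (Z : {set 'I_n}) : Prop :=
  [/\ Z \subset ~: C, X \in Z :|: C, Y \notin Z &
      {in An, forall i,
         ~~ [disjoint family_of E i & Z] -> family_of E i :\: C \subset Z}].

Lemma dsep_moral_separator : dsep E X Y C -> exists Z, moral_separator Z.
Proof.
move=> dXY; have noY := dsep_unreachable dXY.
exists [set z | (z \notin C) && `[< reachable z >]]; split.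
- by apply/subsetP => z; rewrite !inE => /andP[].
- rewrite !inE orbC; case: (X \in C) => //=.
  by apply/asboolP; exists [:: X]; apply: active_walk1.
- by rewrite inE negb_and; apply/orP; right; apply/asboolP.
move=> i iA; rewrite -setI_eq0 => /set0Pn[z /setIP[zi]].
rewrite inE => /andP[zC /asboolP zr].
apply/subsetP => j /setDP[ji jC]; rewrite inE jC; apply/asboolP.
exact: reachable_family noY iA zC zr zi ji.
Qed.

End ActiveWalks.

Section CoordinateSums.
Variables (R : pzRingType) (n : nat) (V : 'I_n -> finType).
Local Notation A := (assignment V).
Local Open Scope ring_scope.

Definition depends_on (S : {set 'I_n}) (F : A -> R) : Prop :=
  forall v w : A, (forall j, j \in S -> v j = w j) -> F v = F w.

Definition splice (S : {set 'I_n}) (v w : A) : A :=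
  finfun (fun j => if j \in S then v j else w j).

Lemma spliceE S v w j : splice S v w j = if j \in S then v j else w j.
Proof. by rewrite ffunE. Qed.

Lemma sum_pair_fst (T B : finType) (F : T -> R) :
  \sum_(p : T * B) F p.1 = #|B|%:R * \sum_t F t.
Proof.
rewrite -(pair_bigA _ (fun t _ => F t)) mulr_sumr; apply: eq_bigr => t _.
by rewrite sumr_const mulr_natl.
Qed.

(* Exchanging the S-coordinates of two assignments is an involution of A * A. *)
Lemma sum_mul_depends_compl S F G :
  depends_on S F -> depends_on (~: S) G ->
  #|{: A}|%:R * (\sum_v F v * G v) = (\sum_v F v) * (\sum_v G v).
Proof.
move=> dF dG.
pose swap (p : A * A) := (splice S p.1 p.2, splice S p.2 p.1).
have swapK : involutive swap.
  case=> v w; congr pair; apply/ffunP => j;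
  by rewrite !spliceE; case: (j \in S).
have FG_splice v w : F (splice S v w) * G (splice S v w) = F v * G w.
  congr (_ * _); [apply: dF | apply: dG] => j; rewrite spliceE ?inE.
    by move->.
  by move/negbTE->.
rewrite -sum_pair_fst (reindex_inj (inv_inj swapK)) /=.
rewrite -(pair_bigA _ (fun v w => F (splice S v w) * G (splice S v w))) /=.
rewrite mulr_suml; apply: eq_bigr => v _.
by rewrite mulr_sumr; apply: eq_bigr => w _.
Qed.

Definition upd (v : A) (i : 'I_n) (x : V i) : A :=
  finfun (dfwith (fun j => v j) x).

Lemma upd_same v i (x : V i) : upd v x i = x.
Proof. by rewrite ffunE dfwith_in. Qed.

Lemma upd_other v i (x : V i) j : i != j -> upd v x j = v j.
Proof. by move=> ij; rewrite ffunE dfwith_out. Qed.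

Lemma updK v i : upd v (v i) = v.
Proof.
apply/ffunP => j; have [<- | ij] := eqVneq i j; first by rewrite upd_same.
by rewrite upd_other.
Qed.

Lemma upd_upd v i (x y : V i) : upd (upd v x) y = upd v y.
Proof.
apply/ffunP => j; have [<- | ij] := eqVneq i j; first by rewrite !upd_same.
by rewrite !upd_other.
Qed.

(* The map (v, x) |-> (v[i := x], v i) is an involution of A * V i. *)
Lemma sum_mul_marginal i (f K : A -> R) :
  (forall v, \sum_(x : V i) f (upd v x) = 1) -> depends_on [set~ i] K ->
  #|V i|%:R * (\sum_v K v * f v) = \sum_v K v.
Proof.
move=> f1 dK.
have K_upd v (x : V i) : K (upd v x) = K v.
  by apply: dK => j; rewrite !inE eq_sym => /upd_other.
pose swap (p : A * V i) := (upd p.1 p.2, p.1 i).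
have swapK : involutive swap.
  by case=> v x; rewrite /swap /= upd_upd updK upd_same.
rewrite -(sum_pair_fst _ (fun v => K v * f v)) (reindex_inj (inv_inj swapK)) /=.
rewrite -(pair_bigA _ (fun v x => K (upd v x) * f (upd v x))) /=.
apply: eq_bigr => v _; rewrite -[RHS]mulr1 -(f1 v) mulr_sumr.
by apply: eq_bigr => x _; rewrite K_upd.
Qed.

End CoordinateSums.

Section Factors.
Variables (R : comPzRingType) (n : nat) (E : rel 'I_n) (V : 'I_n -> finType).
Local Notation A := (assignment V).
Local Open Scope ring_scope.
Hypothesis acyclicE : acyclic E.
Variable cpt : forall i : 'I_n, A -> V i -> R.
Arguments cpt : clear implicits.
Hypothesis cpt_sum1 : forall i v, \sum_(x : V i) cpt i v x = 1.
Hypothesis cpt_local : forall i (v w : A),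
  (forall j, E j i -> v j = w j) -> forall x, cpt i v x = cpt i w x.

Definition factor i (v : A) : R := cpt i v (v i).

Lemma factor_family i : depends_on (family_of E i) (factor i).
Proof.
move=> v w vw; rewrite /factor vw ?in_family_of ?eqxx //.
by apply: cpt_local => j ji; apply: vw; rewrite in_family_of ji orbT.
Qed.

(* Induction on D, summing out a sink of D at each step. *)
Lemma sum_mul_factors_marginal (D : {set 'I_n}) (H : A -> R) :
  depends_on (~: D) H ->
  (\prod_(i in D) #|V i|)%:R * (\sum_v H v * \prod_(i in D) factor i v) =
  \sum_v H v.
Proof.
elim: {D}_.+1 {-2}D (ltnSn #|D|) H => // m IHm D ltDm H dH.
have [-> | /(acyclic_sink acyclicE)[i iD isink]] := eqVneq D set0.
  by rewrite big_set0 mul1r; apply: eq_bigr => v _; rewrite big_set0 mulr1.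
have dH' : depends_on (~: (D :\ i)) H.
  move=> v w vw; apply: dH => j; rewrite !inE => jD.
  by apply: vw; rewrite !inE (negbTE jD) andbF.
have ltD'm : (#|D :\ i| < m)%N by move: ltDm; rewrite (cardsD1 i D) iD.
rewrite (big_setD1 i iD) natrM mulrAC mulrC -[RHS](IHm _ ltD'm H dH').
congr (_ * _).
under eq_bigr => v _ do rewrite (big_setD1 i iD) /= mulrCA mulrC.
apply: sum_mul_marginal => [v | v w vw].
  rewrite -(cpt_sum1 i v); apply: eq_bigr => x _.
  rewrite /factor upd_same; apply: cpt_local => j ji; rewrite upd_other //.
  by apply: contraTneq ji => ->; rewrite (negbTE (acyclic_irrefl acyclicE j)).
congr (_ * _).
  apply: dH => j; rewrite inE => jD; apply: vw.
  by rewrite !inE; apply: contraNneq jD => ->.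
apply: eq_bigr => j; rewrite !inE => /andP[ji jD]; apply: factor_family => l.
rewrite in_family_of => /orP[/eqP -> | lj]; apply: vw; rewrite !inE //.
by apply: contraTneq lj => ->; rewrite (negbTE (isink j jD)).
Qed.

Lemma sum_mul_factors_ancestral (S : {set 'I_n}) (H : A -> R) :
  (forall i j, E j i -> i \in S -> j \in S) -> depends_on S H ->
  (\prod_(i in ~: S) #|V i|)%:R * (\sum_v H v * \prod_i factor i v) =
  \sum_v H v * \prod_(i in S) factor i v.
Proof.
move=> Sclosed dH.
rewrite -(@sum_mul_factors_marginal (~: S)
           (fun v => H v * \prod_(i in S) factor i v)).
  congr (_ * _); apply: eq_bigr => v _; rewrite -mulrA; congr (_ * _).
  rewrite (bigID (mem S)) /=; congr (_ * _).
  by apply: eq_bigl => i; rewrite inE.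
move=> v w vw; rewrite setCK in vw; congr (_ * _); first exact: dH.
apply: eq_bigr => i iS; apply: factor_family => j.
rewrite in_family_of => /orP[/eqP -> | ji]; apply: vw => //.
exact: Sclosed ji iS.
Qed.

End Factors.

Section Factorization.
Variables (R : numFieldType) (n : nat) (E : rel 'I_n) (V : 'I_n -> finType).
Local Notation A := (assignment V).
Local Open Scope ring_scope.
Hypothesis acyclicE : acyclic E.
Variable cpt : forall i : 'I_n, A -> V i -> R.
Arguments cpt : clear implicits.
Hypothesis cpt_ge0 : forall i v x, 0 <= cpt i v x.
Hypothesis cpt_sum1 : forall i v, \sum_(x : V i) cpt i v x = 1.
Hypothesis cpt_local : forall i (v w : A),
  (forall j, E j i -> v j = w j) -> forall x, cpt i v x = cpt i w x.
Variables (X Y : 'I_n) (C : {set 'I_n}) (c : A) (Z : {set 'I_n}).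
Hypothesis sepZ : moral_separator E C X Y Z.

Local Notation fac := (factor cpt).
Local Notation An := (ancestors E (X |: (Y |: C))).
Local Notation event x y v := [&& v X == x, v Y == y & cond_event C c v].

Definition clamp (v : A) : A := finfun (fun j => if j \in C then c j else v j).

Lemma clamp_id v : cond_event C c v -> clamp v = v.
Proof.
move=> /forall_inP vc; apply/ffunP => j.
by rewrite ffunE; case: ifP => // /vc /eqP.
Qed.

Lemma clamp_agree (S : {set 'I_n}) (v w : A) j :
  (forall j, j \in S -> v j = w j) -> j \in C :|: S -> clamp v j = clamp w j.
Proof. by move=> vw; rewrite !ffunE inE; case: ifP => //= _ /vw. Qed.

Definition An_Z : {set 'I_n} := [set i in An | ~~ [disjoint family_of E i & Z]].

(* Fixing the C-coordinates to c makes xfactor depend only on Z and yfactor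
   only on its complement. *)
Definition xfactor (x : V X) (v : A) : R :=
  (clamp v X == x)%:R * \prod_(i in An_Z) fac i (clamp v).

Definition yfactor (y : V Y) (v : A) : R :=
  (cond_event C c v)%:R * (clamp v Y == y)%:R *
  \prod_(i in An :\: An_Z) fac i (clamp v).

Lemma xfactor_ge0 x v : 0 <= xfactor x v.
Proof. by apply: mulr_ge0 => //; apply: prodr_ge0 => i _; apply: cpt_ge0. Qed.

Lemma yfactor_ge0 y v : 0 <= yfactor y v.
Proof.
apply: mulr_ge0; first exact: mulr_ge0.
by apply: prodr_ge0 => i _; apply: cpt_ge0.
Qed.

Lemma depends_xfactor x : depends_on Z (xfactor x).
Proof.
have [_ XZC _ famZ] := sepZ.
move=> v w vw; rewrite /xfactor (clamp_agree vw) 1?setUC //; congr (_ * _).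
apply: eq_bigr => i; rewrite in_set => /andP[iA iZ].
apply: (factor_family cpt_local) => j ji; apply: (clamp_agree vw).
rewrite in_setU; case: (boolP (j \in C)) => //= jC.
by apply: (subsetP (famZ i iA iZ)); rewrite in_setD jC.
Qed.

Lemma depends_yfactor y : depends_on (~: Z) (yfactor y).
Proof.
have [ZC _ YZ _] := sepZ.
move=> v w vw; rewrite /yfactor (clamp_agree vw) ?inE ?YZ ?orbT //.
congr (_%:R * _ * _).
  congr (nat_of_bool _); apply: eq_forallb_in => j jC; rewrite vw // inE.
  by apply: contraL jC => /(subsetP ZC); rewrite inE.
apply: eq_bigr => i; rewrite in_setD => /andP[+ iA].
rewrite in_set iA negbK => iZ.
apply: (factor_family cpt_local) => j ji; apply: (clamp_agree vw).
by rewrite in_setU in_setC (disjointFr iZ ji) orbT.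
Qed.

Lemma xfactor_mul_yfactor x y v :
  xfactor x v * yfactor y v = (event x y v)%:R * \prod_(i in An) fac i v.
Proof.
rewrite /xfactor /yfactor; case: (boolP (cond_event C c v)) => [cv | _].
  rewrite clamp_id // andbT mul1r mulrACA -natrM mulnb.
  rewrite [in RHS](big_setID An_Z) /= (setIidPr _) //.
  by apply/subsetP => i; rewrite in_set => /andP[].
by rewrite !andbF !mul0r mulr0.
Qed.

Lemma sum_event_factorizes :
  exists (f : V X -> R) (g : V Y -> R),
  [/\ forall x, 0 <= f x, forall y, 0 <= g y &
      forall x y, \sum_(v : A | event x y v) \prod_i fac i v = f x * g y].
Proof.
(* The sums range over all assignments, hence the counting factors k and N. *)
pose k := (\prod_(i in ~: An) #|V i|)%N.
pose N := #|{: A}|.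
have kN0 : (k * N)%:R != 0 :> R.
  rewrite pnatr_eq0 muln_eq0 negb_or -!lt0n prodn_cond_gt0 => [|i _].
    by apply/card_gt0P; exists c.
  by apply/card_gt0P; exists (c i).
exists (fun x => (\sum_v xfactor x v) / (k * N)%:R).
exists (fun y => \sum_v yfactor y v).
split=> [x | y | x y].
- by rewrite divr_ge0 // sumr_ge0 // => v _; apply: xfactor_ge0.
- by rewrite sumr_ge0 // => v _; apply: yfactor_ge0.
apply: (mulfI kN0).
rewrite [RHS]mulrA (mulrCA _ (\sum_v xfactor x v)) divff // mulr1.
rewrite -(sum_mul_depends_compl (depends_xfactor x) (depends_yfactor y)).
rewrite natrM mulrAC mulrC; congr (_ * _).
under [in RHS]eq_bigr do rewrite xfactor_mul_yfactor.
rewrite -(sum_mul_factors_ancestral acyclicE cpt_sum1 cpt_local (S := An)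
           (H := fun v => (event x y v)%:R)) //.
- rewrite big_mkcond /=; congr (_ * _); apply: eq_bigr => v _.
  by case: ifP; rewrite ?mul1r ?mul0r.
- by move=> i j ji; apply: ancestors_edge.
have inA j : j \in X |: (Y |: C) -> j \in An by apply: mem_ancestors.
move=> v w vw /=; rewrite !vw ?inA ?inE ?eqxx ?orbT //.
suff -> : cond_event C c v = cond_event C c w by [].
by apply: eq_forallb_in => j jC; rewrite vw // inA // !inE jC !orbT.
Qed.

End Factorization.

Local Open Scope ring_scope.

Lemma markovian_ge0 (R : realFieldType) n (E : rel 'I_n) (V : 'I_n -> finType)
    (P : assignment V -> R) :
  markovian E P -> forall v, 0 <= P v.
Proof. by case=> cpt [cpt_ge0 _ _ PE] v; rewrite PE prodr_ge0. Qed.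

Lemma markovian_dsep_rank1 (R : realFieldType) n (E : rel 'I_n)
    (V : 'I_n -> finType) (P : assignment V -> R)
    (X Y : 'I_n) (C : {set 'I_n}) (c : assignment V) :
  acyclic E -> markovian E P -> dsep E X Y C ->
  exists (f : V X -> R) (g : V Y -> R),
  [/\ forall x, 0 <= f x, forall y, 0 <= g y &
      forall x y,
        prob_event P (fun v => [&& v X == x, v Y == y & cond_event C c v])
        = f x * g y].
Proof.
move=> acyclicE [cpt [cpt_ge0 cpt_sum1 cpt_local PE]].
case/(dsep_moral_separator acyclicE) => Z sepZ.
have [f [g [f_ge0 g_ge0 fg]]] :=
  sum_event_factorizes acyclicE cpt_ge0 cpt_sum1 cpt_local c sepZ.
by exists f, g; split=> // x y; rewrite -fg; apply: eq_bigr => v _; apply: PE.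
Qed.

Lemma nnrank_le (R : realFieldType) (A B : finType) (M : A -> B -> R) r :
  nn_factorization M r -> (nnrank M <= r)%N.
Proof.
move=> Mr; have exr : exists r, `[< nn_factorization M r >].
  by exists r; apply/asboolP.
have [r0 /asboolP Mr0 r0_min] := ex_minnP exr.
have : exists r1, nn_factorization M r1 /\
                  forall r', nn_factorization M r' -> (r1 <= r')%N.
  by exists r0; split=> // r' /asboolP; apply: r0_min.
by move=> /(epsilon_spec (inhabits 0%N))[_]; apply.
Qed.

Theorem lemma1 (R : realFieldType) (n k : nat) (E : rel 'I_n)
    (V : 'I_n -> finType) (P : assignment V -> R)
    (X Y : 'I_n) (C : {set 'I_n}) :
  acyclic E ->
  mixture_BN E k P ->
  dsep E X Y C ->
  forall c : assignment V, (nnrank (prob_matrix P X Y C c) <= k)%N.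
Proof.
move=> acyclicE [w [Pu [w_ge0 _ Pu_markov P_mix]]] dXY c.
have /fin_all_exists[f /fin_all_exists[g fg]] := fun u =>
  markovian_dsep_rank1 c acyclicE (Pu_markov u) dXY.
pose den := prob_event P (cond_event C c).
have den_ge0 : 0 <= den.
  rewrite sumr_ge0 // => v _; rewrite P_mix sumr_ge0 // => u _.
  by rewrite mulr_ge0 // (markovian_ge0 (Pu_markov u)).
apply: nnrank_le; exists (fun x u => w u * f u x / den), g; split.
- by move=> x u; have [f_ge0 _ _] := fg u; rewrite divr_ge0 ?mulr_ge0.
- by move=> u y; have [_ g_ge0 _] := fg u.
move=> x y; rewrite /prob_matrix -/den /prob_event.
under eq_bigr do rewrite P_mix.
rewrite exchange_big mulr_suml; apply: eq_bigr => u _.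
have [_ _ /(_ x y) fgxy] := fg u; rewrite /prob_event /= in fgxy.
by rewrite -mulr_sumr fgxy mulrA [RHS]mulrAC.
Qed.
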